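(* Let $\psi:\mathbb{R}^n\to\mathbb{R}$, $\psi(x)=u^Tx$ with $u\in\mathbb{Z}^n$, let $C,D\subseteq\mathbb{R}^n$ be lattice polytopes and $w\in\mathbb{R}^n$. Then \begin{align*} &\Sigma_\psi(\mathrm{face}_w(C),\mathrm{face}_w(D))+\sum_{i=\psi_{C+D}}^{\psi_{\mathrm{face}_w(C+D)}-1}[C+D]_i+\sum_{i=\psi^{\mathrm{face}_w(C+D)}}^{\psi^{C+D}-1}[C+D]_i\\ &=\mathrm{face}_w\Sigma_\psi(C,D)+\sum_{i=\psi_C}^{\psi_{\mathrm{face}_w(C)}-1}[C]_i+\sum_{i=\psi^{\mathrm{face}_w(C)}}^{\psi^C-1}[C]_i+\sum_{i=\psi_D}^{\psi_{\mathrm{face}_w(D)}-1}[D]_i+\sum_{i=\psi^{\mathrm{face}_w(D)}}^{\psi^D-1}[D]_i . \end{align*}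
   Context: For a polytope $Q$, $\mathrm{face}_w(Q)=\arg\max_{x\in Q}w^Tx$. For a lattice polytope $Q$, $\psi_Q=\min_{x\in Q}\psi(x)$ and $\psi^Q=\max_{x\in Q}\psi(x)$. The fiber polytope is the Minkowski integral $\Sigma_\psi(Q)=\int_{\psi(Q)}(\psi^{-1}(x)\cap Q)\,dx$, which for lattice polytopes equals $\sum_{i=\psi_Q}^{\psi^Q-1}(\psi^{-1}(i+\frac12)\cap Q)$. The mixed fiber polytope $\Sigma_\psi(C,D)$ is the coefficient of $\lambda_1\lambda_2$ in $\Sigma_\psi(\lambda_1C+\lambda_2D)=\lambda_1^2M_{20}+\lambda_1\lambda_2M_{11}+\lambda_2^2M_{02}$, i.e. $\Sigma_\psi(C,D)=M_{11}$. For $i\in\mathbb{Z}$ and a polytope $Q$, $[Q]_i:=\arg\max_{x\in Q\cap\psi^{-1}(i+\frac12)}w^Tx$; sums of these sets are Minkowski sums. *)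

From HB Require Import structures.
From mathcomp Require Import all_boot all_order all_algebra.
From Stdlib Require Import ClassicalEpsilon.
Set Implicit Arguments. Unset Strict Implicit. Unset Printing Implicit Defensive.
Import Order.TTheory GRing.Theory Num.Theory.
Local Open Scope ring_scope.

Section Polytopes.
Variables (R : realFieldType) (n : nat).

Definition mset := 'rV[R]_n -> Prop.

Definition seteq (A B : mset) : Prop := forall x, A x <-> B x.

Definition dotp (a b : 'rV[R]_n) : R := \sum_(j < n) a 0 j * b 0 j.

Definition psi (u : 'rV[int]_n) (x : 'rV[R]_n) : R :=
  \sum_(j < n) (u 0 j)%:~R * x 0 j.

Definition msum (A B : mset) : mset :=
  fun x => exists a b, A a /\ B b /\ x = a + b.
Definition mzero : mset := fun x => x = 0.
Definition mscale (t : R) (A : mset) : mset :=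
  fun x => exists a, A a /\ x = t *: a.

Definition conv (S : seq 'rV[R]_n) : mset :=
  fun x => exists c : 'I_(size S) -> R,
    (forall i, 0 <= c i) /\ \sum_(i < size S) c i = 1 /\
    x = \sum_(i < size S) c i *: S`_i.

Definition is_polytope (Q : mset) : Prop :=
  exists S : seq 'rV[R]_n, S != [::] /\ seteq Q (conv S).

Definition integral_point (x : 'rV[R]_n) : Prop :=
  forall j, exists z : int, x 0 j = z%:~R.

Definition lattice_polytope (Q : mset) : Prop :=
  exists S : seq 'rV[R]_n, S != [::] /\ (forall x, x \in S -> integral_point x)
    /\ seteq Q (conv S).

Definition face (w : 'rV[R]_n) (Q : mset) : mset :=
  fun x => Q x /\ forall y, Q y -> dotp w y <= dotp w x.

(* psi_Q = min_{x in Q} psi(x), psi^Q = max_{x in Q} psi(x); for lattice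
   polytopes these are integers, chosen here by (classical) description. *)
Definition is_min_val (u : 'rV[int]_n) (Q : mset) (m : R) : Prop :=
  (exists x, Q x /\ psi u x = m) /\ forall x, Q x -> m <= psi u x.
Definition is_max_val (u : 'rV[int]_n) (Q : mset) (m : R) : Prop :=
  (exists x, Q x /\ psi u x = m) /\ forall x, Q x -> psi u x <= m.

Definition psi_lo (u : 'rV[int]_n) (Q : mset) : int :=
  epsilon (inhabits 0%R) (fun z : int => is_min_val u Q z%:~R).
Definition psi_hi (u : 'rV[int]_n) (Q : mset) : int :=
  epsilon (inhabits 0%R) (fun z : int => is_max_val u Q z%:~R).

(* Minkowski sum  sum_{i=a}^{b-1} F i  (empty sum = {0} if b <= a) *)
Definition msum_range (a b : int) (F : int -> mset) : mset :=
  let N := if a < b then absz (b - a) else 0%N in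
  foldr msum mzero [seq F (a + k%:Z) | k <- iota 0 N].

Definition slice (u : 'rV[int]_n) (Q : mset) (i : int) : mset :=
  fun x => Q x /\ psi u x = i%:~R + 2^-1.

Definition bracket (u : 'rV[int]_n) (w : 'rV[R]_n) (Q : mset) (i : int) : mset :=
  face w (slice u Q i).

Definition fiber (u : 'rV[int]_n) (Q : mset) : mset :=
  msum_range (psi_lo u Q) (psi_hi u Q) (slice u Q).

(* M is the mixed fiber polytope Sigma_psi(C,D): the coefficient M11 of
   l1 l2 in Sigma_psi(l1 C + l2 D) = l1^2 M20 + l1 l2 M11 + l2^2 M02
   (identity of polytopes, imposed for all natural l1, l2, for which
   l1 C + l2 D is again a lattice polytope). *)
Definition is_mixed_fiber (u : 'rV[int]_n) (C D M : mset) : Prop :=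
  exists M20 M02 : mset,
    is_polytope M20 /\ is_polytope M02 /\ is_polytope M /\
    forall l1 l2 : nat,
      seteq (fiber u (msum (mscale l1%:R C) (mscale l2%:R D)))
            (msum (msum (mscale (l1 ^ 2)%:R M20) (mscale (l1 * l2)%:R M))
                  (mscale (l2 ^ 2)%:R M02)).

End Polytopes.

(* Taking the [w]-face commutes with Minkowski sums, and the [w]-face of a slice
   [psi^-1(i + 1/2) ∩ Q] is the slice of [face_w Q] whenever the hyperplane meets
   [face_w Q].  Hence [face_w Σ(Q)] is [Σ(face_w Q)] plus the brackets [[Q]_i] for
   the levels [i] outside the [psi]-range of [face_w Q].  Apply this to [C], [D] and
   [C + D], and expand [Σ(C + D) = Σ(C) + Σ(C, D) + Σ(D)] (the defining identity at
   [λ = (1, 0), (0, 1), (1, 1)]), and likewise for the faces: both sides of the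
   claim agree after adding the polytopes [Σ(face_w C)] and [Σ(face_w D)].  These
   cancel, since adding a polytope is injective on convex sets: if
   [x + s_i = y_i + Σ_j p_ij s_j] with [y_i ∈ Y] for the points [s_i] spanning the
   polytope, eliminating the [s_j] one at a time from this stochastic linear system
   exhibits [x] as a convex combination of the [y_i]. *)

From HB Require Import structures.
From mathcomp Require Import all_boot all_order all_algebra.
From Stdlib Require Import ClassicalEpsilon FunctionalExtensionality PropExtensionality.
Set Implicit Arguments. Unset Strict Implicit. Unset Printing Implicit Defensive.
Import Order.TTheory GRing.Theory Num.Theory.
Local Open Scope ring_scope.

Section Minkowski.
Variables (R : realFieldType) (n : nat).
Local Notation vec := 'rV[R]_n.
Local Notation mset := (mset R n).
Implicit Types (A B E : mset) (x y : vec).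

Lemma seteqE A B : seteq A B -> A = B.
Proof.
move=> h; apply: functional_extensionality => x.
exact: propositional_extensionality.
Qed.

Lemma eq_seteq A B : A = B -> seteq A B.
Proof. by move=> -> x. Qed.

Lemma msumC A B : msum A B = msum B A.
Proof.
by apply: seteqE => x; split=> -[a [b [Ha [Hb ->]]]]; exists b, a; rewrite addrC.
Qed.

Lemma msumA A B E : msum A (msum B E) = msum (msum A B) E.
Proof.
apply: seteqE => x; split.
- move=> [a [_ [Ha [[b [e [Hb [He ->]]]] ->]]]].
  by exists (a + b), e; rewrite addrA; split=> //; exists a, b.
- move=> [_ [e [[a [b [Ha [Hb ->]]]] [He ->]]]].
  by exists a, (b + e); rewrite addrA; split=> //; split=> //; exists b, e.
Qed.

Lemma msumCA A B E : msum A (msum B E) = msum B (msum A E).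
Proof. by rewrite msumA (msumC A) -msumA. Qed.

Lemma msum0r A : msum A (@mzero R n) = A.
Proof.
apply: seteqE => x; split; first by move=> [a [b [Ha [-> ->]]]]; rewrite addr0.
by move=> Hx; exists x, 0; rewrite addr0.
Qed.

Lemma msum0l A : msum (@mzero R n) A = A.
Proof. by rewrite msumC msum0r. Qed.

Lemma mscale1 A : mscale 1 A = A.
Proof.
apply: seteqE => x; split; first by move=> [a [Ha ->]]; rewrite scale1r.
by move=> Hx; exists x; rewrite scale1r.
Qed.

Lemma mscale0 A : (exists a, A a) -> mscale 0 A = @mzero R n.
Proof.
move=> [a Ha]; apply: seteqE => x; split; first by move=> [b [_ ->]]; rewrite scale0r.
by move=> ->; exists a; rewrite scale0r.
Qed.

Lemma foldr_msum_cat (s1 s2 : seq mset) :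
  foldr (@msum R n) (@mzero R n) (s1 ++ s2) =
  msum (foldr (@msum R n) (@mzero R n) s1) (foldr (@msum R n) (@mzero R n) s2).
Proof. by elim: s1 => [|A s IH] /=; rewrite ?msum0l // IH msumA. Qed.

Lemma msum_rangeE a b (F : int -> mset) : a <= b ->
  msum_range a b F =
  foldr (@msum R n) (@mzero R n) [seq F (a + k%:Z) | k <- iota 0 `|b - a|%N].
Proof.
rewrite le_eqVlt => /orP [/eqP <-|ab]; last by rewrite /msum_range ab.
by rewrite /msum_range ltxx subrr.
Qed.

Lemma msum_range_split a c b (F : int -> mset) : a <= c -> c <= b ->
  msum_range a b F = msum (msum_range a c F) (msum_range c b F).
Proof.
move=> ac cb; have ab := le_trans ac cb.
rewrite !msum_rangeE //.
have -> : `|b - a|%N = (`|c - a| + `|b - c|)%N.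
  apply/eqP; rewrite -eqz_nat PoszD !gez0_abs ?subr_ge0 //.
  by rewrite [c - a + _]addrC addrA subrK.
rewrite iotaD map_cat foldr_msum_cat add0n -{2}(addn0 `|c - a|%N) iotaDl -map_comp.
congr (msum _ (foldr _ _ _)); apply: eq_map => k /=.
by rewrite PoszD addrA gez0_abs ?subr_ge0 // [a + _]addrC subrK.
Qed.

Lemma eq_msum_range a b (F G : int -> mset) :
  (forall i, a <= i -> i < b -> F i = G i) -> msum_range a b F = msum_range a b G.
Proof.
move=> FG; rewrite /msum_range; case: ifP => // ab.
congr foldr; apply/eq_in_map => k; rewrite mem_iota add0n => /andP [_ kb].
apply: FG; first by rewrite lerDl.
have ba : 0 <= b - a by rewrite subr_ge0 ltW.
by rewrite -ltrBrDl -(gez0_abs ba) ltz_nat.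
Qed.

End Minkowski.

Section LinearForms.
Variables (R : realFieldType) (n : nat).
Local Notation vec := 'rV[R]_n.
Implicit Types (x y : vec).

Lemma dotpD w x y : dotp w (x + y) = dotp w x + dotp w y.
Proof. by rewrite /dotp -big_split; apply: eq_bigr => j _; rewrite mxE mulrDr. Qed.

Lemma dotpZ w k x : dotp w (k *: x) = k * dotp w x.
Proof. by rewrite /dotp mulr_sumr; apply: eq_bigr => j _; rewrite mxE mulrCA. Qed.

Lemma dotp0 w : dotp w (0 : vec) = 0.
Proof. by rewrite /dotp big1 // => j _; rewrite mxE mulr0. Qed.

Lemma dotpNl w x : dotp (- w) x = - dotp w x.
Proof. by rewrite /dotp -sumrN; apply: eq_bigr => j _; rewrite mxE mulNr. Qed.

Lemma dotp_sum w m (c : 'I_m -> R) (s : 'I_m -> vec) :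
  dotp w (\sum_i c i *: s i) = \sum_i c i * dotp w (s i).
Proof.
rewrite (big_morph (dotp w) (dotpD w) (dotp0 w)).
by apply: eq_bigr => i _; rewrite dotpZ.
Qed.

Definition intr_row (u : 'rV[int]_n) : vec := map_mx (fun z : int => z%:~R) u.

Lemma psiE u x : psi u x = dotp (intr_row u) x.
Proof. by apply: eq_bigr => j _; rewrite mxE. Qed.

Lemma psiD u x y : psi u (x + y) = psi u x + psi u y.
Proof. by rewrite !psiE dotpD. Qed.

Lemma psiZ u k x : psi u (k *: x) = k * psi u x.
Proof. by rewrite !psiE dotpZ. Qed.

Lemma psi_integral_point u x : integral_point x -> exists z : int, psi u x = z%:~R.
Proof.
move=> hx; apply: (big_ind (fun r : R => exists z : int, r = z%:~R)).
- by exists 0.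
- by move=> _ _ [z1 ->] [z2 ->]; exists (z1 + z2); rewrite intrD.
- by move=> j _; have [z ->] := hx j; exists (u 0 j * z); rewrite intrM.
Qed.

End LinearForms.

Arguments intr_row {R n}.

Section Convexity.
Variables (R : realFieldType) (n : nat).
Local Notation vec := 'rV[R]_n.
Local Notation mset := (mset R n).
Implicit Types (A B : mset) (x y : vec) (S : seq vec).

Definition convex A := forall x y s t, 0 <= s -> 0 <= t -> s + t = 1 ->
  A x -> A y -> A (s *: x + t *: y).

Lemma convex_mzero : convex (@mzero R n).
Proof. by move=> x y s t _ _ _ -> ->; rewrite !scaler0 addr0. Qed.

Lemma convex_msum A B : convex A -> convex B -> convex (msum A B).
Proof.
move=> cA cB x y s t s0 t0 st [a [b [Ha [Hb ->]]]] [a' [b' [Ha' [Hb' ->]]]].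
exists (s *: a + t *: a'), (s *: b + t *: b'); split; first exact: cA.
by split; [exact: cB | rewrite !scalerDr addrACA].
Qed.

Lemma convex_msum_range a b (F : int -> mset) :
  (forall i, convex (F i)) -> convex (msum_range a b F).
Proof.
move=> cF; rewrite /msum_range.
by elim: (iota _ _) => [|k s IH] /=; [exact: convex_mzero | exact: convex_msum].
Qed.

Lemma convex_face w A : convex A -> convex (face w A).
Proof.
move=> cA x y s t s0 t0 st [Ax Mx] [Ay My]; split; first exact: cA.
move=> z Az; rewrite dotpD !dotpZ.
rewrite -[dotp w z]mul1r -st mulrDl.
by apply: lerD; apply: ler_wpM2l => //; [apply: Mx | apply: My].
Qed.

Lemma convex_slice u A i : convex A -> convex (slice u A i).
Proof.
move=> cA x y s t s0 t0 st [Ax Px] [Ay Py]; split; first exact: cA.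
by rewrite psiD !psiZ Px Py -mulrDl st mul1r.
Qed.

Lemma convex_conv S : convex (conv S).
Proof.
move=> x y s t s0 t0 st [c [c0 [c1 ->]]] [d [d0 [d1 ->]]].
exists (fun i => s * c i + t * d i); split.
  by move=> i; apply: addr_ge0; apply: mulr_ge0.
split; first by rewrite big_split /= -!mulr_sumr c1 d1 !mulr1.
rewrite !scaler_sumr -big_split /=; apply: eq_bigr => i _.
by rewrite scalerDl !scalerA.
Qed.

Lemma convex_polytope A : is_polytope A -> convex A.
Proof. by move=> [S [_ /seteqE ->]]; apply: convex_conv. Qed.

Lemma convex_lattice_polytope A : lattice_polytope A -> convex A.
Proof. by move=> [S [_ [_ /seteqE ->]]]; apply: convex_conv. Qed.

Lemma conv_nth S (i : 'I_(size S)) : conv S S`_i.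
Proof.
exists (fun j => (j == i)%:R); split; first by move=> j; rewrite ler0n.
split; first by rewrite (bigD1 i) //= eqxx big1 ?addr0 // => j /negbTE ->.
by rewrite (bigD1 i) //= eqxx scale1r big1 ?addr0 // => j /negbTE ->; rewrite scale0r.
Qed.

Lemma conv_nonempty S : S != [::] -> exists x, conv S x.
Proof. by case: S => // s S _; exists (s :: S)`_(@ord0 (size S)); apply: conv_nth. Qed.

Lemma polytope_nonempty A : is_polytope A -> exists x, A x.
Proof. by move=> [S [/conv_nonempty [x Sx] /seteqE ->]]; exists x. Qed.

End Convexity.

Section Faces.
Variables (R : realFieldType) (n : nat).
Local Notation vec := 'rV[R]_n.
Local Notation mset := (mset R n).
Implicit Types (A B : mset) (x y : vec).

Lemma face_msum w A B : face w (msum A B) = msum (face w A) (face w B).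
Proof.
apply: seteqE => x; split.
- move=> [[a [b [Aa [Bb ->]]]] Mab].
  exists a, b; split; last split=> //.
  + by split=> // y Ay; have := Mab (y + b); rewrite !dotpD lerD2r; apply; exists y, b.
  + by split=> // y By; have := Mab (a + y); rewrite !dotpD lerD2l; apply; exists a, y.
- move=> [a [b [[Aa Ma] [[Bb Mb] ->]]]]; split; first by exists a, b.
  by move=> _ [a' [b' [Aa' [Bb' ->]]]]; rewrite !dotpD lerD ?Ma ?Mb.
Qed.

Lemma face_mzero w : face w (@mzero R n) = @mzero R n.
Proof. by apply: seteqE => x; split=> [[]|x0] //; split=> // y ->; rewrite x0. Qed.

Lemma face_msum_range w a b (F : int -> mset) :
  face w (msum_range a b F) = msum_range a b (fun i => face w (F i)).
Proof.
rewrite /msum_range; elim: (iota _ _) => [|k s IH] /=; first exact: face_mzero.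
by rewrite face_msum IH.
Qed.

End Faces.

Section Vertices.
Variables (R : realFieldType) (n : nat).
Local Notation vec := 'rV[R]_n.
Local Notation mset := (mset R n).
Variable S : seq vec.
Implicit Types (P : pred 'I_(size S)) (x : vec).

Definition conv_on P x := exists c : 'I_(size S) -> R,
  [/\ forall i, 0 <= c i, \sum_i c i = 1, x = \sum_i c i *: S`_i
    & forall i, 0 < c i -> P i].

Definition face_index (w : vec) : pred 'I_(size S) :=
  fun i => [forall j : 'I_(size S), dotp w S`_j <= dotp w S`_i].

Lemma conv_on_predT x : conv S x -> conv_on predT x.
Proof. by move=> [c [c0 [c1 ->]]]; exists c. Qed.

Lemma conv_on_ex P x : conv_on P x -> exists i, P i.
Proof.
move=> [c [c0 c1 _ cP]]; case: (pickP P) => [i Pi|noP]; first by exists i.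
suff : \sum_i c i = 0 by rewrite c1 => /eqP; rewrite oner_eq0.
apply: big1 => i _; apply/eqP; rewrite eq_le c0 andbT leNgt.
by apply/negP => /cP; rewrite noP.
Qed.

Lemma dotp_conv_on_ge v P m x :
  conv_on P x -> (forall i, P i -> m <= dotp v S`_i) -> m <= dotp v x.
Proof.
move=> [c [c0 c1 -> cP]] mP; rewrite dotp_sum -[m]mul1r -c1 mulr_suml.
apply: ler_sum => i _; have := c0 i; rewrite le_eqVlt => /orP [/eqP <-|ci].
  by rewrite !mul0r.
by rewrite ler_wpM2l ?c0 ?mP ?cP.
Qed.

Lemma face_conv_vertex w i : face_index w i -> face w (conv S) S`_i.
Proof.
move=> /forallP Mi; split; first exact: conv_nth.
move=> y /conv_on_predT Sy; rewrite -lerN2 -!dotpNl.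
by apply: (dotp_conv_on_ge Sy) => j _; rewrite !dotpNl lerN2.
Qed.

Lemma face_conv_on w x : face w (conv S) x -> conv_on (face_index w) x.
Proof.
move=> [Sx Mx]; have [c [c0 c1 xE _]] := conv_on_predT Sx.
have Mj (j : 'I_(size S)) : dotp w S`_j <= dotp w x := Mx _ (conv_nth j).
exists c; split=> // i ci; apply/forallP => j.
suff -> : dotp w S`_i = dotp w x by apply: Mj.
(* the gaps to [x] are nonnegative and average to 0, so a positively weighted one vanishes *)
have gap0 : \sum_k c k * (dotp w x - dotp w S`_k) = 0.
  under eq_bigr do rewrite mulrBr.
  by rewrite sumrB -mulr_suml c1 mul1r -dotp_sum -xE subrr.
have gap_ge0 k : 0 <= c k * (dotp w x - dotp w S`_k).
  by rewrite mulr_ge0 ?c0 ?subr_ge0.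
have /eqP := psumr_eq0P (fun k _ => gap_ge0 k) gap0 (i := i) isT.
by rewrite mulf_eq0 gt_eqF //= subr_eq0 => /eqP.
Qed.

Lemma ex_vertex_argmin v P : (exists i, P i) ->
  exists2 i, P i & forall j, P j -> dotp v S`_i <= dotp v S`_j.
Proof.
move=> [i0 Pi0].
by case: (arg_minP (fun i : 'I_(size S) => dotp v S`_i) Pi0) => i Pi Mi; exists i.
Qed.

Lemma ex_min_vertex v P (F : mset) :
  (forall i, P i -> F S`_i) -> (forall x, F x -> conv_on P x) -> (exists x, F x) ->
  exists2 i : 'I_(size S), F S`_i & forall x, F x -> dotp v S`_i <= dotp v x.
Proof.
move=> FP PF [x0 /PF /conv_on_ex /(ex_vertex_argmin v) [i Pi Mi]].
by exists i => [|x /PF Px]; [apply: FP | apply: (dotp_conv_on_ge Px)].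
Qed.

Lemma face_conv_nonempty w : S != [::] -> exists x, face w (conv S) x.
Proof.
move=> /conv_nonempty [x /conv_on_predT /conv_on_ex /(ex_vertex_argmin (- w))].
move=> [i _ Mi]; exists S`_i; apply: face_conv_vertex; apply/forallP => j.
by rewrite -lerN2 -!dotpNl Mi.
Qed.

End Vertices.

Section IntegralExtrema.
Variables (R : realFieldType) (n : nat).
Local Notation vec := 'rV[R]_n.
Local Notation mset := (mset R n).
Variable u : 'rV[int]_n.
Implicit Types (A B Q : mset).

(* [psi_lo] and [psi_hi] are chosen by [epsilon]; they are the actual extrema only
   when some integer extremum exists. *)
Definition integral_extrema Q :=
  is_min_val u Q (psi_lo u Q)%:~R /\ is_max_val u Q (psi_hi u Q)%:~R.

Lemma integral_extremaP Q :
  (exists z : int, is_min_val u Q z%:~R) -> (exists z : int, is_max_val u Q z%:~R) ->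
  integral_extrema Q.
Proof.
by move=> hmin hmax; split; [exact: epsilon_spec hmin | exact: epsilon_spec hmax].
Qed.

Lemma integral_extrema_nonempty Q : integral_extrema Q -> exists x, Q x.
Proof. by move=> [[[x [Qx _]] _] _]; exists x. Qed.

Lemma is_min_val_msum A B a b :
  is_min_val u A a -> is_min_val u B b -> is_min_val u (msum A B) (a + b).
Proof.
move=> [[x [Ax <-]] ha] [[y [By <-]] hb]; split.
  by exists (x + y); split; [exists x, y | rewrite psiD].
by move=> _ [x' [y' [Ax' [By' ->]]]]; rewrite psiD lerD ?ha ?hb.
Qed.

Lemma is_max_val_msum A B a b :
  is_max_val u A a -> is_max_val u B b -> is_max_val u (msum A B) (a + b).
Proof.
move=> [[x [Ax <-]] ha] [[y [By <-]] hb]; split.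
  by exists (x + y); split; [exists x, y | rewrite psiD].
by move=> _ [x' [y' [Ax' [By' ->]]]]; rewrite psiD lerD ?ha ?hb.
Qed.

Lemma integral_extrema_msum A B :
  integral_extrema A -> integral_extrema B -> integral_extrema (msum A B).
Proof.
move=> [mA MA] [mB MB]; apply: integral_extremaP.
  by exists (psi_lo u A + psi_lo u B); rewrite intrD; apply: is_min_val_msum.
by exists (psi_hi u A + psi_hi u B); rewrite intrD; apply: is_max_val_msum.
Qed.

Lemma integral_extrema_vertices (S : seq vec) (P : pred 'I_(size S)) Q :
  (forall x, x \in S -> integral_point x) ->
  (forall i, P i -> Q S`_i) -> (forall x, Q x -> conv_on P x) -> (exists x, Q x) ->
  integral_extrema Q.
Proof.
move=> intS QP PQ Qne.
have psi_nth (i : 'I_(size S)) : exists z : int, psi u S`_i = z%:~R.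
  exact/psi_integral_point/intS/mem_nth.
apply: integral_extremaP.
- have [i Qi Mi] := ex_min_vertex (intr_row u) QP PQ Qne.
  have [z zE] := psi_nth i; exists z; rewrite -zE.
  by split=> [|x Qx]; [exists S`_i | rewrite !psiE Mi].
- have [i Qi Mi] := ex_min_vertex (- intr_row u) QP PQ Qne.
  have [z zE] := psi_nth i; exists z; rewrite -zE.
  by split=> [|x Qx]; [exists S`_i | rewrite !psiE -lerN2 -!dotpNl Mi].
Qed.

Lemma lattice_polytope_extrema w Q : lattice_polytope Q ->
  integral_extrema Q /\ integral_extrema (face w Q).
Proof.
move=> [S [Sne [intS /seteqE ->]]]; split.
- exact: integral_extrema_vertices intS (fun i _ => conv_nth i)
    (@conv_on_predT _ _ S) (conv_nonempty Sne).
- exact: integral_extrema_vertices intS (@face_conv_vertex _ _ S w)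
    (@face_conv_on _ _ S w) (face_conv_nonempty w Sne).
Qed.

End IntegralExtrema.

Section FaceOfFiber.
Variables (R : realFieldType) (n : nat).
Local Notation vec := 'rV[R]_n.
Local Notation mset := (mset R n).
Variables (u : 'rV[int]_n) (w : vec).
Implicit Types (A Q : mset).

Lemma convex_bracket Q i : convex Q -> convex (bracket u w Q i).
Proof. by move=> cQ; apply/convex_face/convex_slice. Qed.

Lemma bracket_face Q i : (exists x, slice u (face w Q) i x) ->
  bracket u w Q i = slice u (face w Q) i.
Proof.
move=> [z [[Qz Mz] Pz]]; apply: seteqE => x; split.
- move=> [[Qx Px] Mx]; split=> //; split=> // y Qy.
  exact: le_trans (Mz y Qy) (Mx z (conj Qz Pz)).
- by move=> [[Qx Mx] Px]; split=> // y [Qy _]; apply: Mx.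
Qed.

Lemma ex_slice {A} {l h i : int} : convex A ->
  is_min_val u A l%:~R -> is_max_val u A h%:~R -> l <= i -> i < h ->
  exists x, slice u A i x.
Proof.
move=> cA [[x1 [A1 P1]] _] [[x2 [A2 P2]] _] li ih.
set t : R := i%:~R + 2^-1.
have l_le_t : l%:~R <= t by rewrite ler_wpDr ?invr_ge0 ?ler0n ?ler_int.
have t_le_h : t <= h%:~R.
  apply: (@le_trans _ _ (i + 1)%:~R); last by rewrite ler_int lezD1.
  by rewrite intrD lerD2l invf_le1 // ler1n.
have hl : 0 < h%:~R - l%:~R :> R by rewrite subr_gt0 ltr_int (le_lt_trans li ih).
(* the point of the segment [x1, x2] on which [psi] takes the value [t] *)
set s := (t - l%:~R) / (h%:~R - l%:~R).
have s0 : 0 <= s by rewrite divr_ge0 ?(ltW hl) ?subr_ge0.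
have s1 : s <= 1 by rewrite ler_pdivrMr // mul1r lerD2r.
exists ((1 - s) *: x1 + s *: x2); split; first by apply: cA; rewrite ?subr_ge0 ?subrK.
rewrite psiD !psiZ P1 P2 mulrBl mul1r addrAC -addrA -mulrBr divfK ?gt_eqF //.
by rewrite addrC subrK.
Qed.

Definition outer_brackets Q :=
  msum (msum_range (psi_lo u Q) (psi_lo u (face w Q)) (bracket u w Q))
       (msum_range (psi_hi u (face w Q)) (psi_hi u Q) (bracket u w Q)).

Lemma convex_outer_brackets Q : convex Q -> convex (outer_brackets Q).
Proof.
by move=> cQ; apply: convex_msum; apply: convex_msum_range => i; apply: convex_bracket.
Qed.

Lemma face_fiber Q : convex Q -> integral_extrema u Q -> integral_extrema u (face w Q) ->
  face w (fiber u Q) = msum (fiber u (face w Q)) (outer_brackets Q).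
Proof.
move=> cQ [[_ minQ] [_ maxQ]] [mF MF].
have [[x1 [F1 P1]] _] := mF; have [[x3 [F3 P3]] maxF] := MF.
have lo_le : psi_lo u Q <= psi_lo u (face w Q).
  by rewrite -(ler_int R) -P1 minQ //; case: F1.
have lo_hi : psi_lo u (face w Q) <= psi_hi u (face w Q).
  by rewrite -(ler_int R) -P1 maxF.
have hi_le : psi_hi u (face w Q) <= psi_hi u Q.
  by rewrite -(ler_int R) -P3 maxQ //; case: F3.
rewrite /fiber face_msum_range (msum_range_split _ lo_le (le_trans lo_hi hi_le)).
rewrite (msum_range_split _ lo_hi hi_le) msumCA; congr (msum _ (msum _ _)).
apply: eq_msum_range => i li ih; apply: bracket_face.
exact: ex_slice (convex_face cQ) mF MF li ih.
Qed.

End FaceOfFiber.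

Section StochasticElimination.
Variables (R : realFieldType) (n : nat).
Local Notation vec := 'rV[R]_n.
Local Notation mset := (mset R n).
Variable B : mset.
Hypothesis cB : convex B.

Definition cone_mem (c : R) (z : vec) := 0 < c /\ B (c^-1 *: z).

Lemma cone_memD c1 c2 r z1 z2 : cone_mem c1 z1 -> cone_mem c2 z2 -> 0 <= r ->
  cone_mem (c1 + r * c2) (z1 + r *: z2).
Proof.
move=> [c1_gt0 Bz1] [c2_gt0 Bz2] r0.
have c_gt0 : 0 < c1 + r * c2 := ltr_wpDr (mulr_ge0 r0 (ltW c2_gt0)) c1_gt0.
split=> //; set c := c1 + r * c2.
have -> : c^-1 *: (z1 + r *: z2) =
    (c1 / c) *: (c1^-1 *: z1) + (r * c2 / c) *: (c2^-1 *: z2).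
  rewrite scalerDr !scalerA; congr (_ + _).
    by rewrite mulrAC mulfV ?gt_eqF // mul1r.
  by rewrite mulrAC -(mulrA r) mulfV ?gt_eqF // mulr1 mulrC.
apply: cB => //.
- exact: divr_ge0 (ltW c1_gt0) (ltW c_gt0).
- exact: divr_ge0 (mulr_ge0 r0 (ltW c2_gt0)) (ltW c_gt0).
- by rewrite -mulrDl mulfV ?gt_eqF.
Qed.

Lemma cone_memZ c x : cone_mem c (c *: x) -> B x.
Proof. by move=> [c0]; rewrite scalerA mulVf ?gt_eqF // scale1r. Qed.

Variable a : vec.

Definition stochastic_system m (c : nat -> R) (z t : nat -> vec) (P : nat -> nat -> R) :=
  forall i, (i <= m)%N ->
  [/\ cone_mem (c i) (z i), forall j, 0 <= P i j, \sum_(j < m.+1) P i j = 1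
    & c i *: a + t i = z i + \sum_(j < m.+1) P i j *: t j].

Lemma stochastic_system0 c z t P : stochastic_system 0 c z t P -> B a.
Proof.
move=> /(_ 0%N (leqnn _)) [cz _]; rewrite !big_ord1 => ->.
by rewrite scale1r => /addIr E; move: cz; rewrite -E; apply: cone_memZ.
Qed.

Lemma stochastic_system_elim m c z t P : stochastic_system m.+1 c z t P ->
  B a \/ exists c' z' P', stochastic_system m c' z' t P'.
Proof.
move=> sys; have [cz_m Pm_ge0] := sys m.+1 (leqnn _).
rewrite !(big_ord_recr m.+1) /=.
set q := P m.+1 m.+1; set S := \sum_(j < m.+1) P m.+1 j *: t j => Pm1 Em.
have [q1|q_neq1] := eqVneq q 1.
  left; have Pm0 : \sum_(j < m.+1) P m.+1 j = 0.
    by apply: (addIr q); rewrite Pm1 q1 add0r.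
  have S0 : S = 0.
    rewrite /S big1 // => j _.
    by rewrite (psumr_eq0P (fun (k : 'I_m.+1) _ => Pm_ge0 k) Pm0 (i := j)) ?scale0r.
  move: Em; rewrite S0 add0r q1 scale1r => /addIr E.
  by move: cz_m; rewrite -E; apply: cone_memZ.
right.
have Pm1' : \sum_(j < m.+1) P m.+1 j = 1 - q by rewrite -Pm1 addrK.
have q_lt1 : 0 < 1 - q.
  by rewrite subr_gt0 lt_neqAle q_neq1 -Pm1 lerDr sumr_ge0.
(* the last equation solves for [t m.+1]; substitute it into the others *)
have Et : (1 - q) *: t m.+1 = z m.+1 + S - c m.+1 *: a.
  have -> : z m.+1 + S = c m.+1 *: a + t m.+1 - q *: t m.+1 by rewrite Em addrA addrK.
  by rewrite scalerBl scale1r [RHS]addrAC [c m.+1 *: a + _]addrC addrK.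
set r := fun i => P i m.+1 / (1 - q).
exists (fun i => c i + r i * c m.+1), (fun i => z i + r i *: z m.+1),
  (fun i j => P i j + r i * P m.+1 j) => i im.
have [cz_i Pi_ge0] := sys i (leqW im); rewrite !(big_ord_recr m.+1) /= => Pi1 Ei.
have r0 : 0 <= r i := divr_ge0 (Pi_ge0 _) (ltW q_lt1).
have rq : r i * (1 - q) = P i m.+1 by rewrite divfK ?gt_eqF.
split.
- exact: cone_memD.
- by move=> j; apply: addr_ge0 (Pi_ge0 j) (mulr_ge0 r0 (Pm_ge0 j)).
- by rewrite big_split /= -mulr_sumr Pm1' rq.
- have Pt : P i m.+1 *: t m.+1 = r i *: (z m.+1 + S - c m.+1 *: a).
    by rewrite -Et scalerA rq.
  under eq_bigr do rewrite scalerDl -scalerA.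
  rewrite big_split /= -scaler_sumr -/S scalerDl addrAC Ei Pt.
  by rewrite !scalerDr scalerN -scalerA -[LHS]addrA -addrA subrK addrA addrACA.
Qed.

Lemma stochastic_system_mem m c z t P : stochastic_system m c z t P -> B a.
Proof.
elim: m c z t P => [|m IH] c z t P; first exact: stochastic_system0.
by case/stochastic_system_elim => [//|[c' [z' [P' /IH]]]].
Qed.

End StochasticElimination.

Section MinkowskiCancellation.
Variables (R : realFieldType) (n : nat).
Local Notation vec := 'rV[R]_n.
Local Notation mset := (mset R n).

Lemma msum_conv_cancel (X Y : mset) (S : seq vec) : S != [::] -> convex Y ->
  (forall x, msum X (conv S) x -> msum Y (conv S) x) -> forall x, X x -> Y x.
Proof.
case: S => // s0 S' _; set S := s0 :: S' => cY XY x Xx.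
have row (i : 'I_(size S)) : exists p : vec * ('I_(size S) -> R),
    [/\ Y p.1, forall j, 0 <= p.2 j, \sum_j p.2 j = 1 &
        x + S`_i = p.1 + \sum_j p.2 j *: S`_j].
  have [y [_ [Yy [[c [c0 [c1 ->]]] E]]]] : msum Y (conv S) (x + S`_i).
    by apply: XY; exists x, S`_i; split=> //; split=> //; apply: conv_nth.
  by exists (y, c).
pose f i := proj1_sig (constructive_indefinite_description _ (row i)).
have hf i := proj2_sig (constructive_indefinite_description _ (row i)).
apply: (@stochastic_system_mem _ _ Y cY x (size S') (fun _ => 1)
   (fun i => (f (inord i)).1) (fun i => S`_i) (fun i j => (f (inord i)).2 (inord j))).
move=> i im; have [Yi Pi si Ei] := hf (inord i); split=> //.
- by split; rewrite ?invr1 ?scale1r.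
- by rewrite -si; apply: eq_bigr => j _; rewrite inord_val.
- rewrite scale1r -[in LHS](@inordK (size S') i) // Ei.
  by congr (_ + _); apply: eq_bigr => j _; rewrite inord_val.
Qed.

Lemma msum_cancel (K X Y : mset) : is_polytope K -> convex X -> convex Y ->
  msum K X = msum K Y -> X = Y.
Proof.
move=> [S [Sne /seteqE ->]] cX cY E; rewrite msumC [msum _ Y]msumC in E.
apply: seteqE => x; split.
- by apply: (msum_conv_cancel Sne cY) => y; rewrite E.
- by apply: (msum_conv_cancel Sne cX) => y; rewrite E.
Qed.

Lemma msum_cancel2 (K1 K2 X Y : mset) : is_polytope K1 -> is_polytope K2 ->
  convex X -> convex Y -> msum (msum K1 K2) X = msum (msum K1 K2) Y -> X = Y.
Proof.
move=> pK1 pK2 cX cY; rewrite -!msumA => E; apply: (msum_cancel pK2 cX cY).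
have cK2 := convex_polytope pK2.
exact: msum_cancel pK1 (convex_msum cK2 cX) (convex_msum cK2 cY) E.
Qed.

End MinkowskiCancellation.

Lemma mixed_fiberE (R : realFieldType) (n : nat) (u : 'rV[int]_n) (C D M : mset R n) :
  (exists x, C x) -> (exists x, D x) -> is_mixed_fiber u C D M ->
  [/\ is_polytope M, is_polytope (fiber u C), is_polytope (fiber u D)
    & fiber u (msum C D) = msum (msum (fiber u C) M) (fiber u D)].
Proof.
move=> neC neD [M20 [M02 [pM20 [pM02 [pM expand]]]]].
have mscale0P A : is_polytope A -> mscale 0 A = @mzero R n.
  by move=> /polytope_nonempty; apply: mscale0.
have := seteqE (expand 1%N 0%N); have := seteqE (expand 0%N 1%N).
have := seteqE (expand 1%N 1%N); rewrite /= !mulr1n !mulr0n !mscale1.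
rewrite (mscale0 neC) (mscale0 neD) !mscale0P // !msum0r !msum0l => -> -> ->.
by split.
Qed.


Theorem theorem4p9 (R : realFieldType) (n : nat) (u : 'rV[int]_n)
  (C D : mset R n) (w : 'rV[R]_n)
  (hC : lattice_polytope C) (hD : lattice_polytope D)
  (M : mset R n) (hM : is_mixed_fiber u C D M)
  (Mf : mset R n) (hMf : is_mixed_fiber u (face w C) (face w D) Mf) :
  let CD := msum C D in
  seteq
    (msum Mf
      (msum (msum_range (psi_lo u CD) (psi_lo u (face w CD)) (bracket u w CD))
            (msum_range (psi_hi u (face w CD)) (psi_hi u CD) (bracket u w CD))))
    (msum (face w M)
      (msum (msum (msum_range (psi_lo u C) (psi_lo u (face w C)) (bracket u w C))
                  (msum_range (psi_hi u (face w C)) (psi_hi u C) (bracket u w C)))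
            (msum (msum_range (psi_lo u D) (psi_lo u (face w D)) (bracket u w D))
                  (msum_range (psi_hi u (face w D)) (psi_hi u D) (bracket u w D))))).
Proof.
move=> CD; apply: eq_seteq.
rewrite -/(outer_brackets u w CD) -/(outer_brackets u w C) -/(outer_brackets u w D).
have [eC efC] := lattice_polytope_extrema u w hC.
have [eD efD] := lattice_polytope_extrema u w hD.
have cC := convex_lattice_polytope hC; have cD := convex_lattice_polytope hD.
have fCD : face w CD = msum (face w C) (face w D) := face_msum w C D.
have efCD : integral_extrema u (face w CD).
  by rewrite fCD; apply: integral_extrema_msum.
have [pM _ _ fiberCD] :=
  mixed_fiberE (integral_extrema_nonempty eC) (integral_extrema_nonempty eD) hM.
have [pMf pfC pfD fiber_fCD] :=
  mixed_fiberE (integral_extrema_nonempty efC) (integral_extrema_nonempty efD) hMf.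
have FCD : face w (fiber u CD) = msum (fiber u (face w CD)) (outer_brackets u w CD).
  exact: face_fiber (convex_msum cC cD) (integral_extrema_msum eC eD) efCD.
apply: (msum_cancel2 pfC pfD).
- exact: convex_msum (convex_polytope pMf) (convex_outer_brackets (convex_msum cC cD)).
- exact: convex_msum (convex_face (convex_polytope pM))
    (convex_msum (convex_outer_brackets cC) (convex_outer_brackets cD)).
transitivity (face w (fiber u CD)).
  rewrite FCD fCD fiber_fCD; move: (outer_brackets u w CD) => OCD.
  by rewrite -!msumA (msumCA Mf).
rewrite fiberCD !face_msum !face_fiber //.
move: (outer_brackets u w C) (outer_brackets u w D) => OC OD.
by rewrite -!msumA (msumCA (face w M)) (msumCA OC (fiber u (face w D))) (msumCA OC).
Qed.
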